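(* Let $G$ be a connected graph with vertex set $V$, and let $V'$ be the set of new vertices (one for each edge of $G$) so that both the subdivision $S(G)$ and the triangulation $T(G)$ have vertex set $V\cup V'$ (the new vertex associated with the edge $kl$ being the same in both graphs). Denote by $\Omega^S_{ij}$ and $\Omega^T_{ij}$ the resistance distances between $i$ and $j$ in $S(G)$ and $T(G)$ respectively. Then: (1) for $i,j\in V$, $\Omega^T_{ij}=\frac{1}{3}\Omega^S_{ij}$; (2) for $i\in V'$ and $j\in V$, $\Omega^T_{ij}=\frac{1}{3}\Omega^S_{ij}+\frac{1}{3}$; (3) for distinct $i,j\in V'$, $\Omega^T_{ij}=\frac{1}{3}\Omega^S_{ij}+\frac{2}{3}$.
   Context: All graphs are finite, undirected, without loops or multiple edges. For a connected graph $H$ and vertices $i,j$, the resistance distance between $i$ and $j$ is the effective resistance between them in the electrical network obtained from $H$ by replacing each edge by a unit resistor. The subdivision $S(G)$ is obtained from $G$ by replacing each edge $kl$ by a path $k\,w\,l$ through a new vertex $w$. The triangulation $T(G)$ is obtained from $G$ by adding, for each edge $kl$, a new vertex $w$ adjacent to both $k$ and $l$ (keeping the edge $kl$), so each edge becomes a triangle. *)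

From HB Require Import structures.
From mathcomp Require Import all_boot all_order all_algebra.
Set Implicit Arguments. Unset Strict Implicit. Unset Printing Implicit Defensive.
Import Order.TTheory GRing.Theory Num.Theory.
Local Open Scope ring_scope.

(* A simple graph on a finite vertex type T is a symmetric irreflexive
   relation e : rel T.  Edges of G are the 2-element vertex sets {k,l} with
   e k l. *)
Definition is_edge (T : finType) (e : rel T) (s : {set T}) : bool :=
  [exists k, exists l, e k l && (s == [set k; l])].

(* The type of edges of G; these are the new vertices V' of S(G) and T(G). *)
Definition edge (T : finType) (e : rel T) := {s : {set T} | is_edge e s}.
HB.instance Definition _ (T : finType) (e : rel T) := Finite.on (edge e).

Definition svert (T : finType) (e : rel T) := (T + edge e)%type.
HB.instance Definition _ (T : finType) (e : rel T) := Finite.on (svert e).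

Definition adjS (T : finType) (e : rel T) : rel (svert e) :=
  fun x y => match x, y with
  | inl k, inr w => k \in val w
  | inr w, inl k => k \in val w
  | _, _ => false
  end.

Definition adjT (T : finType) (e : rel T) : rel (svert e) :=
  fun x y => match x, y with
  | inl k, inl l => e k l
  | inl k, inr w => k \in val w
  | inr w, inl k => k \in val w
  | _, _ => false
  end.

Definition laplacian (R : fieldType) (V : finType) (adj : rel V) : 'M[R]_#|V| :=
  \matrix_(i, j) (if i == j then (#|[set y | adj (enum_val i) y]|)%:R
                  else - (adj (enum_val i) (enum_val j))%:R).

(* Resistance distance between a and b: inject a unit current at a and
   extract it at b, i.e. solve x L = e_a - e_b (solvable when the graph is
   connected; pinvmx gives a solution), and take the potential difference
   x_a - x_b = x (e_a - e_b)^T. *)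
Definition resistance (R : fieldType) (V : finType) (adj : rel V) (a b : V) : R :=
  let u : 'rV[R]_#|V| := delta_mx 0 (enum_rank a) - delta_mx 0 (enum_rank b) in
  (u *m pinvmx (laplacian R adj) *m u^T) 0 0.

Arguments adjS {T} e.
Arguments adjT {T} e.
Arguments laplacian R {V} adj.
Arguments resistance R {V} adj a b.

From HB Require Import structures.
From mathcomp Require Import all_boot all_order all_algebra.
From mathcomp Require Import ring.
Import Order.TTheory GRing.Theory Num.Theory.
Local Open Scope ring_scope.

(* Let x be the potential of the unit dipole a -> b in S(G), i.e.
   L_S x = e_a - e_b.  Raising x at every new vertex w by (L_S x)(w) gives a
   potential y with L_T y = 3 L_S x: at w = {k, l} both graphs see only k and
   l, and each difference y w - y t grows by (L_S x)(w); at an old vertex v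
   the extra edges v t of T(G) exactly compensate the change along the paths
   v w t.  So y / 3 is a dipole potential in T(G), and
   Omega^T_ab = (y a - y b) / 3, where y differs from x only at the new
   vertices among a and b, by +-1. *)

Section Laplacian.
Variables (R : realFieldType) (V : finType) (adj : rel V).
Hypotheses (adj_sym : symmetric adj) (adj_irr : irreflexive adj).

Definition lapf (f : V -> R) (z : V) : R := \sum_w (f z - f w) * (adj z w)%:R.

Lemma sum_enum_rank (F : 'I_#|V| -> R) :
  \sum_(i < #|V|) F i = \sum_(v : V) F (enum_rank v).
Proof. exact: (reindex enum_rank (onW_bij _ (@enum_rank_bij V))). Qed.

Lemma mulmx_laplacian (x : 'rV[R]_#|V|) (z : V) :
  (x *m laplacian R adj) 0 (enum_rank z) = lapf (fun w => x 0 (enum_rank w)) z.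
Proof.
rewrite mxE sum_enum_rank /lapf.
under eq_bigr => v _ do rewrite /laplacian mxE !enum_rankK (inj_eq enum_rank_inj).
rewrite (bigD1 z) //= eqxx [RHS](bigD1 z) //= subrr mul0r add0r.
rewrite -sum1dep_card natr_sum big_mkcond (bigD1 z) //= adj_irr add0r.
rewrite mulr_sumr -big_split; apply: eq_bigr => v /negbTE nvz /=.
by rewrite nvz adj_sym; case: (adj v z) => /=; ring.
Qed.

Lemma eq_lapf (f g : V -> R) z : f =1 g -> lapf f z = lapf g z.
Proof. by move=> fg; apply: eq_bigr => w _; rewrite !fg. Qed.

Lemma lapfZl (f : V -> R) c z : lapf (fun w => f w * c) z = lapf f z * c.
Proof. by rewrite /lapf mulr_suml; apply: eq_bigr => w _; ring. Qed.

Lemma resistance_xx (a : V) : resistance R adj a a = 0.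
Proof. by rewrite /resistance subrr !mul0mx mxE. Qed.

Lemma tr_laplacian : (laplacian R adj)^T = laplacian R adj.
Proof.
apply/matrixP => i j; rewrite !mxE.
by have [->|_] := eqVneq j i; last rewrite adj_sym.
Qed.

Definition dipole (a b : V) : 'rV[R]_#|V| :=
  delta_mx 0 (enum_rank a) - delta_mx 0 (enum_rank b).

Lemma dipole_mul_tr (a b : V) (z : 'rV[R]_#|V|) :
  (dipole a b *m z^T) 0 0 = z 0 (enum_rank a) - z 0 (enum_rank b).
Proof. by rewrite /dipole mulmxBl -!rowE !mxE. Qed.

Lemma dipoleE (a b z : V) :
  dipole a b 0 (enum_rank z) = (z == a)%:R - (z == b)%:R.
Proof. by rewrite !mxE !(inj_eq enum_rank_inj). Qed.

(* Any solution of the dipole equation computes the resistance, not only the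
   one chosen by [pinvmx], because the Laplacian is symmetric. *)
Lemma resistance_solution (a b : V) (w : 'rV[R]_#|V|) :
  w *m laplacian R adj = dipole a b ->
  resistance R adj a b = w 0 (enum_rank a) - w 0 (enum_rank b).
Proof.
move=> hw; rewrite /resistance -/(dipole a b) -dipole_mul_tr.
have sub : (dipole a b <= laplacian R adj)%MS by rewrite -hw submxMl.
by rewrite -{2}hw trmx_mul tr_laplacian mulmxA (mulmxKpV sub).
Qed.

Hypothesis adj_conn : forall x y : V, connect adj x y.

(* Maximum principle: the set where f attains its maximum is closed under
   adjacency, since there lapf f = 0 is a sum of nonnegative terms. *)
Lemma harmonic_const (f : V -> R) :
  (forall z, lapf f z = 0) -> forall a b, f a = f b.
Proof.
move=> harm a b.
have [m _ f_max] := @Order.TotalTheory.arg_maxP _ R V a predT f isT.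
have max_adj x y : adj x y -> f x = f m -> f y = f m.
  move=> xy fx; have ge0 w : true -> 0 <= (f x - f w) * (adj x w)%:R.
    by move=> _; rewrite fx mulr_ge0 ?ler0n // subr_ge0; apply: f_max.
  have /eqP := psumr_eq0P ge0 (harm x) isT (i := y).
  by rewrite xy mulr1 subr_eq0 => /eqP <-.
have cl : closed adj [pred w | f w == f m].
  move=> x y xy; rewrite !inE; apply/eqP/eqP => [|fy]; first exact: max_adj.
  by apply: max_adj fy; rewrite adj_sym.
have := closed_connect cl (adj_conn m b); have := closed_connect cl (adj_conn m a).
by rewrite !inE eqxx => /esym/eqP -> /esym/eqP ->.
Qed.

Lemma dipole_sub_laplacian (a b : V) : (dipole a b <= laplacian R adj)%MS.
Proof.
rewrite submxE; move: (cokermx _) (mulmx_coker (laplacian R adj)) => c Lc.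
apply/eqP/rowP => j.
have cjL : row j c^T *m laplacian R adj = 0.
  by rewrite -row_mul -tr_laplacian -trmx_mul Lc trmx0 row0.
have harm z : lapf (fun w => (row j c^T) 0 (enum_rank w)) z = 0.
  by rewrite -mulmx_laplacian cjL mxE.
have /eqP := harmonic_const _ harm a b.
rewrite -subr_eq0 -dipole_mul_tr => /eqP ab0; rewrite [RHS]mxE -ab0 !mxE.
by apply: eq_bigr => k _; rewrite !mxE.
Qed.

End Laplacian.

Arguments lapf {R V} adj f z.
Arguments dipole R {V} a b.
Arguments mulmx_laplacian {R V adj}.
Arguments resistance_solution {R V adj} adj_sym {a b w}.
Arguments dipole_sub_laplacian {R V adj}.

Section Subdivision.
Variables (R : realFieldType) (T : finType) (e : rel T).
Hypotheses (e_sym : symmetric e) (e_irr : irreflexive e).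

Lemma adjS_sym : symmetric (adjS e).
Proof. by case=> [x|x] [y|y]. Qed.

Lemma adjS_irr : irreflexive (adjS e).
Proof. by case. Qed.

Lemma adjT_sym : symmetric (adjT e).
Proof. by case=> [x|x] [y|y] //=; rewrite e_sym. Qed.

Lemma adjT_irr : irreflexive (adjT e).
Proof. by case=> [x|x] //=; rewrite e_irr. Qed.

Lemma edgeP (w : edge e) : exists k l, [/\ e k l, k != l & val w = [set k; l]].
Proof.
have /existsP [k /existsP [l /andP [kl /eqP ->]]] := valP w.
by exists k, l; split=> //; apply: contraTneq kl => ->; rewrite e_irr.
Qed.

Lemma card_edge (w : edge e) : #|val w| = 2%N.
Proof. by have [k [l [_ kl ->]]] := edgeP w; rewrite cards2 kl. Qed.

Lemma edge_set2 {w : edge e} {v t} :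
  v \in val w -> t \in val w -> t != v -> e v t /\ val w = [set v; t].
Proof.
have [k [l [kl _ ->]]] := edgeP w; rewrite !inE.
by case/orP=> /eqP-> /orP[] /eqP->; rewrite ?eqxx // e_sym setUC.
Qed.

Definition edge_of {v t} (vt : e v t) : edge e :=
  exist _ [set v; t] (introT existsP (ex_intro _ v (introT existsP
    (ex_intro _ t (introT andP (conj vt (eqxx _))))))).

Lemma sum_edges_through2 v t :
  \sum_(w : edge e | (v \in val w) && ((t \in val w) && (t != v))) (1 : R)
  = (e v t)%:R.
Proof.
have [->|tv] := eqVneq t v.
  by rewrite e_irr big_pred0 // => w; rewrite !andbF.
case vt: (e v t).
  rewrite (big_pred1 (edge_of vt)) // => w /=; rewrite andbT.
  apply/andP/eqP => [[vw tw]|->]; last by rewrite !inE !eqxx orbT.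
  by apply: val_inj; case: (edge_set2 vw tw tv).
rewrite big_pred0 // => w; rewrite andbT; apply/andP => -[vw tw].
by case: (edge_set2 vw tw tv); rewrite vt.
Qed.

Lemma sum_edges_other_end v (F : T -> R) :
  \sum_(w : edge e | v \in val w) \sum_(t | (t \in val w) && (t != v)) F t
  = \sum_t (e v t)%:R * F t.
Proof.
rewrite (exchange_big_dep xpredT) //=; apply: eq_bigr => t _.
by rewrite -sum_edges_through2 mulr_suml; apply: eq_bigr => w _; rewrite mul1r.
Qed.

Lemma sum_other_end1 {w : edge e} {v} : v \in val w ->
  \sum_(t | (t \in val w) && (t != v)) (1 : R) = 1.
Proof.
move=> vw; rewrite sumr_const.
suff -> : #|[pred t | (t \in val w) && (t != v)]| = 1%N by [].
have := cardsD1 v (val w); rewrite vw card_edge add1n => -[->].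
by apply: eq_card => t; rewrite !inE andbC.
Qed.

Lemma sum_edges_at1 v :
  \sum_(w : edge e | v \in val w) (1 : R) = \sum_t (e v t)%:R.
Proof.
under eq_bigr => w vw do rewrite -(sum_other_end1 vw).
by rewrite sum_edges_other_end; under eq_bigr do rewrite mulr1.
Qed.

Lemma lapf_adjS_inr (h : svert e -> R) (w : edge e) :
  lapf (adjS e) h (inr w) = \sum_(t in val w) (h (inr w) - h (inl t)).
Proof.
rewrite /lapf big_sumType /= [X in _ + X]big1 ?addr0 => [|? _]; last exact: mulr0.
by rewrite [RHS]big_mkcond; apply: eq_bigr => t _; case: ifP; rewrite ?mulr1 ?mulr0.
Qed.

Lemma lapf_adjS_inl (h : svert e -> R) v :
  lapf (adjS e) h (inl v) = \sum_(w : edge e | v \in val w) (h (inl v) - h (inr w)).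
Proof.
rewrite /lapf big_sumType /= [X in X + _]big1 ?add0r => [|? _]; last exact: mulr0.
by rewrite [RHS]big_mkcond; apply: eq_bigr => w _; case: ifP; rewrite ?mulr1 ?mulr0.
Qed.

Lemma lapf_adjT_inr (h : svert e -> R) (w : edge e) :
  lapf (adjT e) h (inr w) = lapf (adjS e) h (inr w).
Proof. by []. Qed.

Lemma lapf_adjT_inl (h : svert e -> R) v :
  lapf (adjT e) h (inl v)
  = lapf (adjS e) h (inl v) + \sum_t (h (inl v) - h (inl t)) * (e v t)%:R.
Proof.
rewrite /lapf !big_sumType /= [in RHS]big1 ?add0r 1?addrC // => t _.
exact: mulr0.
Qed.

Lemma lapf_adjS_inr_at (h : svert e -> R) (w : edge e) v : v \in val w ->
  lapf (adjS e) h (inr w)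
  = 2 * h (inr w) - h (inl v) - \sum_(t | (t \in val w) && (t != v)) h (inl t).
Proof.
move=> vw; rewrite lapf_adjS_inr (bigD1 v) //= sumrB.
have -> : \sum_(t | (t \in val w) && (t != v)) h (inr w) = h (inr w).
  rewrite -[RHS]mulr1 -(sum_other_end1 vw) mulr_sumr.
  by under [RHS]eq_bigr do rewrite mulr1.
ring.
Qed.

Definition is_new (z : svert e) : bool := if z is inr _ then true else false.

Definition tri_potential (f : svert e -> R) (z : svert e) : R :=
  if z is inr _ then f z + lapf (adjS e) f z else f z.

Variable f : svert e -> R.

Lemma lapf_tri_potential_inr (w : edge e) :
  lapf (adjT e) (tri_potential f) (inr w) = 3 * lapf (adjS e) f (inr w).
Proof.
rewrite lapf_adjT_inr !lapf_adjS_inr /=.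
under eq_bigr do rewrite addrAC.
by rewrite big_split /= sumr_const card_edge -lapf_adjS_inr; ring.
Qed.

Lemma lapf_tri_potential_inl v :
  lapf (adjT e) (tri_potential f) (inl v) = 3 * lapf (adjS e) f (inl v).
Proof.
rewrite lapf_adjT_inl !lapf_adjS_inl /=.
pose O (w : edge e) := \sum_(t | (t \in val w) && (t != v)) f (inl t).
rewrite (eq_bigr (fun w : edge e => 2 * f (inl v) - 3 * f (inr w) + O w));
  last by move=> w vw; rewrite (lapf_adjS_inr_at _ _ _ vw) /O; ring.
have -> : \sum_t (f (inl v) - f (inl t)) * (e v t)%:R
          = f (inl v) * \sum_t (e v t)%:R - \sum_t (e v t)%:R * f (inl t).
  by rewrite mulr_sumr -sumrB; apply: eq_bigr => t _; ring.
rewrite -sum_edges_at1 -sum_edges_other_end !mulr_sumr -!sumrB -!big_split /=.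
by apply: eq_bigr => w _; rewrite /O; ring.
Qed.

Lemma lapf_tri_potential z :
  lapf (adjT e) (tri_potential f) z = 3 * lapf (adjS e) f z.
Proof.
by case: z; [exact: lapf_tri_potential_inl | exact: lapf_tri_potential_inr].
Qed.

Lemma tri_potentialE z :
  tri_potential f z = f z + (is_new z)%:R * lapf (adjS e) f z.
Proof. by case: z => /= [v|w]; rewrite ?mul0r ?addr0 ?mul1r. Qed.

End Subdivision.

Arguments adjS_sym {T e}.
Arguments adjS_irr {T e}.
Arguments adjT_sym {T e}.
Arguments adjT_irr {T e}.
Arguments edgeP {T e}.
Arguments edge_of {T e v t}.
Arguments is_new {T e}.
Arguments tri_potential {R T e}.
Arguments lapf_tri_potential {R T e}.
Arguments tri_potentialE {R T e}.

Section Resistance.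
Variables (R : realFieldType) (T : finType) (e : rel T).
Hypotheses (e_sym : symmetric e) (e_irr : irreflexive e)
  (e_conn : forall x y : T, connect e x y).

Lemma connect_adjS_inl k l : connect e k l -> connect (adjS e) (inl k) (inl l).
Proof.
move=> /connectP [p kp ->] {l}; elim: p k kp => [|l p IHp] k //= /andP [kl lp].
apply: connect_trans (IHp _ lp).
have kw : adjS e (inl k) (inr (edge_of kl)) by rewrite /= !inE eqxx.
have wl : adjS e (inr (edge_of kl)) (inl l) by rewrite /= !inE eqxx orbT.
exact: connect_trans (connect1 kw) (connect1 wl).
Qed.

Lemma adjS_connected x y : connect (adjS e) x y.
Proof.
have to_old z : exists k, connect (adjS e) z (inl k).
  case: z => [k|w]; first by exists k.
  have [k [l [_ _ wkl]]] := edgeP e_irr w.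
  by exists k; apply: connect1; rewrite /= wkl !inE eqxx.
have [[k xk] [l yl]] := (to_old x, to_old y).
apply: connect_trans xk _; rewrite (sym_connect_sym adjS_sym).
by apply: connect_trans yl _; apply: connect_adjS_inl.
Qed.

Lemma resistance_adjT (a b : svert e) : a != b ->
  resistance R (adjT e) a b
  = (resistance R (adjS e) a b + (is_new a)%:R + (is_new b)%:R) / 3.
Proof.
move=> ab.
pose x := dipole R a b *m pinvmx (laplacian R (adjS e)).
have Lx : x *m laplacian R (adjS e) = dipole R a b.
  exact/mulmxKpV/dipole_sub_laplacian/adjS_connected/adjS_irr/adjS_sym.
pose fx w := x 0 (enum_rank w).
have lapf_fx z : lapf (adjS e) fx z = dipole R a b 0 (enum_rank z).
  by rewrite -(mulmx_laplacian adjS_sym adjS_irr) Lx.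
pose y := \row_(i < #|{: svert e}|) (tri_potential fx (enum_val i) / 3).
have Ly : y *m laplacian R (adjT e) = dipole R a b.
  apply/rowP => j; rewrite -(enum_valK j).
  rewrite (mulmx_laplacian (adjT_sym e_sym) (adjT_irr e_irr)).
  rewrite (@eq_lapf _ _ _ _ (fun w => tri_potential fx w / 3)) => [|w]; last first.
    by rewrite mxE enum_rankK.
  by rewrite lapfZl lapf_tri_potential // lapf_fx mulrC mulKf ?pnatr_eq0.
rewrite (resistance_solution adjS_sym Lx) -/(fx a) -/(fx b).
rewrite (resistance_solution (adjT_sym e_sym) Ly) !mxE !enum_rankK.
rewrite !tri_potentialE !lapf_fx !dipoleE !eqxx (negbTE ab) eq_sym (negbTE ab) /=.
ring.
Qed.

End Resistance.

Arguments resistance_adjT R {T e}.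

Theorem proposition4p2 (R : realFieldType) (T : finType) (e : rel T)
    (e_sym : symmetric e) (e_irr : irreflexive e)
    (e_conn : forall x y : T, connect e x y) :
  [/\ (forall i j : T,
         resistance R (adjT e) (inl i) (inl j)
         = resistance R (adjS e) (inl i) (inl j) / 3),
      (forall (i : edge e) (j : T),
         resistance R (adjT e) (inr i) (inl j)
         = resistance R (adjS e) (inr i) (inl j) / 3 + 1 / 3) &
      (forall i j : edge e, i != j ->
         resistance R (adjT e) (inr i) (inr j)
         = resistance R (adjS e) (inr i) (inr j) / 3 + 2 / 3)].
Proof.
have new_old := resistance_adjT R e_sym e_irr e_conn.
split=> [i j | i j | i j ij].
- have [->|ij] := eqVneq i j; first by rewrite !resistance_xx mul0r.
  by rewrite new_old ?(inj_eq inl_inj) //= !addr0.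
- by rewrite new_old //=; ring.
- by rewrite new_old ?(inj_eq inr_inj) //=; ring.
Qed.
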